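(* System 2 has exactly four fixed points, the double poles $p_{\varepsilon_1,\varepsilon_2}=((0,0,\varepsilon_11),(0,0,\varepsilon_21))$, $\varepsilon_1,\varepsilon_2\in\{+,-\}$. The fixed points $p_{+,+}$, $p_{-,+}$ and $p_{-,-}$ are non-degenerate of elliptic-elliptic type for all $t\in[0,1]$, while $p_{+,-}$ is non-degenerate of elliptic-elliptic type if $t<t^-$ or $t>t^+$, non-degenerate of focus-focus type if $t^-<t<t^+$, and degenerate if $t\in\{t^-,t^+\}$, where $$t^\pm=\frac{R_2}{2R_2+R_1\mp2\sqrt{R_1R_2}}.$$
   Context: Let $0<R_1<R_2$ and $t\in[0,1]$. On $M=S^2\times S^2$ with Cartesian coordinates $(x_i,y_i,z_i)$, $x_i^2+y_i^2+z_i^2=1$, and cylindrical coordinates $(\theta_i,z_i)$, $\theta_i=\arg(x_i+iy_i)$, System 2 is the $b$-integrable system with $Z=\{z_1=0\}$, $b$-symplectic form $\omega=R_1\frac{dz_1}{z_1}\wedge d\theta_1+R_2\,dz_2\wedge d\theta_2$ (in the local chart $(x_1,y_1,x_2,y_2)$ on $\{\varepsilon_1z_1>0,\varepsilon_2z_2>0\}$: $\omega=-\frac{R_1}{1-x_1^2-y_1^2}dx_1\wedge dy_1-\varepsilon_2\frac{R_2}{\sqrt{1-x_2^2-y_2^2}}dx_2\wedge dy_2$), and $L=R_1\log|z_1|+R_2z_2$, $H=(1-t)\log|z_1|+t(x_1x_2+y_1y_2+z_1z_2)$. A fixed point is a point where $dL=dH=0$. A fixed point $p$ with $\Omega$ the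 matrix of $\omega$ at $p$ is non-degenerate if $A_L=\Omega^{-1}d^2L(p)$, $A_H=\Omega^{-1}d^2H(p)$ span a Cartan subalgebra of $\mathfrak{sp}(4,\mathbb R)$; it is elliptic-elliptic if some combination $c_1A_L+c_2A_H$ has four distinct eigenvalues $\pm i\alpha,\pm i\beta$ ($\alpha\ne\beta$ nonzero reals) and focus-focus if such a combination has eigenvalues $\pm\alpha\pm i\beta$ with $\alpha,\beta$ nonzero reals. *)

From HB Require Import structures.
From mathcomp Require Import all_boot all_order all_algebra.
From mathcomp Require Import all_classical all_reals all_analysis.
From mathcomp Require Import complex.

Set Implicit Arguments.
Unset Strict Implicit.
Unset Printing Implicit Defensive.

Import Order.TTheory GRing.Theory Num.Theory.
Import numFieldNormedType.Exports.
Local Open Scope ring_scope.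

(* Points of S^2 x S^2 are rows
   p : 'rV[R]_6 with p = (x1,y1,z1,x2,y2,z2).  Signs eps in {+,-} are bools
   (true = +). *)

Section System2.
Variable R : realType.

Definition co (p : 'rV[R]_6) (k : nat) : R := p ord0 (inord k).
Definition cu (u : 'rV[R]_4) (k : nat) : R := u ord0 (inord k).

Definition mkpt (x1 y1 z1 x2 y2 z2 : R) : 'rV[R]_6 :=
  \row_(k < 6) nth 0 [:: x1; y1; z1; x2; y2; z2] k.

Definition onM (p : 'rV[R]_6) : Prop :=
  co p 0 ^+ 2 + co p 1 ^+ 2 + co p 2 ^+ 2 = 1 /\
  co p 3 ^+ 2 + co p 4 ^+ 2 + co p 5 ^+ 2 = 1.

Definition tangentM (p v : 'rV[R]_6) : Prop :=
  co v 0 * co p 0 + co v 1 * co p 1 + co v 2 * co p 2 = 0 /\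
  co v 3 * co p 3 + co v 4 * co p 4 + co v 5 * co p 5 = 0.

(* A b-function  f = c log|z1| + g  (g smooth on R^6).  Its b-differential
   vanishes at p iff: off Z, the ordinary differential of f on T_pM vanishes;
   on Z = {z1 = 0}, the coefficient c of dz1/z1 vanishes and dg vanishes on
   T_p Z. *)
Definition bfun (c : R) (g : 'rV[R]_6 -> R) : 'rV[R]_6 -> R :=
  fun q => c * ln `|co q 2| + g q.

Definition bcrit (c : R) (g : 'rV[R]_6 -> R) (p : 'rV[R]_6) : Prop :=
  if co p 2 != 0 then
    forall v, tangentM p v -> is_derive p v (bfun c g) 0
  else
    c = 0 /\ forall v, tangentM p v -> co v 2 = 0 -> is_derive p v g 0.

Definition cL (R1 : R) : R := R1.
Definition gL (R2 : R) (q : 'rV[R]_6) : R := R2 * co q 5.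
Definition cH (t : R) : R := 1 - t.
Definition gH (t : R) (q : 'rV[R]_6) : R :=
  t * (co q 0 * co q 3 + co q 1 * co q 4 + co q 2 * co q 5).

Definition Lfun R1 R2 := bfun (cL R1) (gL R2).
Definition Hfun t := bfun (cH t) (gH t).

Definition fixed_point (R1 R2 t : R) (p : 'rV[R]_6) : Prop :=
  onM p /\ bcrit (cL R1) (gL R2) p /\ bcrit (cH t) (gH t) p.

Definition sgn (e : bool) : R := if e then 1 else -1.

Definition pole (e1 e2 : bool) : 'rV[R]_6 := mkpt 0 0 (sgn e1) 0 0 (sgn e2).

Definition chart (e1 e2 : bool) (u : 'rV[R]_4) : 'rV[R]_6 :=
  mkpt (cu u 0) (cu u 1) (sgn e1 * Num.sqrt (1 - cu u 0 ^+ 2 - cu u 1 ^+ 2))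
       (cu u 2) (cu u 3) (sgn e2 * Num.sqrt (1 - cu u 2 ^+ 2 - cu u 3 ^+ 2)).

(* matrix of omega in the chart:  Omega_ij = omega(d_i, d_j), where
   omega = -R1/(1-x1^2-y1^2) dx1/\dy1 - e2 R2/sqrt(1-x2^2-y2^2) dx2/\dy2 *)
Definition omega_mx (R1 R2 : R) (e2 : bool) (u : 'rV[R]_4) : 'M[R]_4 :=
  let a := - (R1 / (1 - cu u 0 ^+ 2 - cu u 1 ^+ 2)) in
  let b := - (sgn e2 * (R2 / Num.sqrt (1 - cu u 2 ^+ 2 - cu u 3 ^+ 2))) in
  \matrix_(i < 4, j < 4)
    (if (i == 0 :> nat) && (j == 1 :> nat) then a
     else if (i == 1 :> nat) && (j == 0 :> nat) then - a
     else if (i == 2 :> nat) && (j == 3 :> nat) then b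
     else if (i == 3 :> nat) && (j == 2 :> nat) then - b
     else 0).

Definition hess0 (f : 'rV[R]_4 -> R) : 'M[R]_4 :=
  \matrix_(i < 4, j < 4)
    'D_(delta_mx ord0 i) (fun q => 'D_(delta_mx ord0 j) f q) 0.

Definition A_L (R1 R2 : R) (e1 e2 : bool) : 'M[R]_4 :=
  invmx (omega_mx R1 R2 e2 0) *m hess0 (fun u => Lfun R1 R2 (chart e1 e2 u)).
Definition A_H (R1 R2 t : R) (e1 e2 : bool) : 'M[R]_4 :=
  invmx (omega_mx R1 R2 e2 0) *m hess0 (fun u => Hfun t (chart e1 e2 u)).

Definition lie (X Y : 'M[R]_4) : 'M[R]_4 := X *m Y - Y *m X.

Definition in_sp (Om X : 'M[R]_4) : Prop := X^T *m Om + Om *m X = 0.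

Definition span2 (A B X : 'M[R]_4) : Prop := exists a b : R, X = a *: A + b *: B.

(* the linear span of A and B is a Cartan subalgebra of sp(Omega):
   a Lie subalgebra that is nilpotent and self-normalizing *)
Definition cartan_span (Om A B : 'M[R]_4) : Prop :=
  [/\ (forall X, span2 A B X -> in_sp Om X),
      (forall X Y, span2 A B X -> span2 A B Y -> span2 A B (lie X Y)),
      (exists n : nat, forall (x : 'M[R]_4) (s : seq 'M[R]_4),
          span2 A B x -> (forall y, y \in s -> span2 A B y) ->
          size s = n -> foldr lie x s = 0) &
      (forall X, in_sp Om X ->
          (forall Y, span2 A B Y -> span2 A B (lie X Y)) -> span2 A B X)].

Definition nondeg (R1 R2 t : R) (e1 e2 : bool) : Prop :=
  cartan_span (omega_mx R1 R2 e2 0) (A_L R1 R2 e1 e2) (A_H R1 R2 t e1 e2).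

Definition cplx_eigen (M : 'M[R]_4) (l : R[i]) : Prop :=
  eigenvalue (map_mx (fun x : R => Complex x 0) M) l.

Definition ell_ell_mx (M : 'M[R]_4) : Prop :=
  exists al be : R, [/\ al != 0, be != 0, al != be, al != - be &
    forall l : R[i], cplx_eigen M l <->
      (l = Complex 0 al \/ l = Complex 0 (- al) \/
       l = Complex 0 be \/ l = Complex 0 (- be))].

Definition focus_focus_mx (M : 'M[R]_4) : Prop :=
  exists al be : R, [/\ al != 0, be != 0 &
    forall l : R[i], cplx_eigen M l <->
      (l = Complex al be \/ l = Complex al (- be) \/
       l = Complex (- al) be \/ l = Complex (- al) (- be))].

Definition elliptic_elliptic (R1 R2 t : R) (e1 e2 : bool) : Prop :=
  exists c1 c2 : R, ell_ell_mx (c1 *: A_L R1 R2 e1 e2 + c2 *: A_H R1 R2 t e1 e2).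

Definition focus_focus (R1 R2 t : R) (e1 e2 : bool) : Prop :=
  exists c1 c2 : R, focus_focus_mx (c1 *: A_L R1 R2 e1 e2 + c2 *: A_H R1 R2 t e1 e2).

Definition t_plus (R1 R2 : R) : R := R2 / (2 * R2 + R1 - 2 * Num.sqrt (R1 * R2)).
Definition t_minus (R1 R2 : R) : R := R2 / (2 * R2 + R1 + 2 * Num.sqrt (R1 * R2)).

End System2.

From Pilot Require Import Defs.
From HB Require Import structures.
From mathcomp Require Import all_boot all_order all_algebra.
From mathcomp Require Import all_classical all_reals all_analysis.
From mathcomp Require Import complex.
From mathcomp Require Import ring lra.
Import Order.TTheory GRing.Theory Num.Theory.
Import numFieldNormedType.Exports.
Local Open Scope ring_scope.

(* On Z = {z1 = 0} the b-differential of L contains R1 dz1/z1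
   with R1 != 0, so fixed points lie off Z.  There dL vanishes on T_pM only if
   x1 = y1 = x2 = y2 = 0, i.e. at the four double poles; conversely, at a double
   pole every tangent vector has zero z-components, so dL = dH = 0.

   In the chart (x1, y1, x2, y2) at p_{e1,e2} every relevant matrix is
   a Kronecker product with J = [[0, 1], [-1, 0]]: Omega = diag(-R1, -e2 R2) (x) J,
   A_L = - I (x) J and A_H = K (x) J for an explicit 2x2 matrix K.  So the
   problem reduces to 2x2 linear algebra, developed first for arbitrary K:
   - the complex eigenvalues of M (x) J are -+i mu for the roots mu of the
     characteristic polynomial of M; hence disc K > 0 yields an
     elliptic-elliptic and disc K < 0 a focus-focus combination c1 A_L + c2 A_H;
   - span(A_L, A_H) is a Cartan subalgebra of sp(Omega) when disc K != 0, and
     is not self-normalizing when disc K = 0 (and K is not diagonal).  Finally the sign of disc K is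
   determined: it is positive at p_{+,+}, p_{-,+} and p_{-,-}, while at p_{+,-}
   (R1 R2)^2 disc K = (P t - R2) (Q t - R2), whose roots are t^+ = R2 / P and
   t^- = R2 / Q. *)

Definition mx4 {T : Type} (f : nat -> nat -> T) : 'M[T]_4 := \matrix_(i < 4, j < 4) f i j.

Lemma eq_mx4 {T : Type} (f g : nat -> nat -> T) :
  (forall i j, (i < 4)%N -> (j < 4)%N -> f i j = g i j) -> mx4 f = mx4 g.
Proof. by move=> fg; apply/matrixP => i j; rewrite !mxE fg. Qed.

Lemma mx4_inj {T : Type} (f g : nat -> nat -> T) : mx4 f = mx4 g ->
  forall i j, (i < 4)%N -> (j < 4)%N -> f i j = g i j.
Proof.
move=> fg i j hi hj; have := congr1 (fun M : 'M[T]_4 => M (Ordinal hi) (Ordinal hj)) fg.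
by rewrite !mxE.
Qed.

Lemma mx4_entries {T : Type} (X : 'M[T]_4) : X = mx4 (fun i j => X (inord i) (inord j)).
Proof. by apply/matrixP => i j; rewrite mxE !inord_val. Qed.

Lemma mx4_mul {T : pzSemiRingType} (f g : nat -> nat -> T) : mx4 f *m mx4 g =
  mx4 (fun i j => f i 0%N * g 0%N j + f i 1%N * g 1%N j + f i 2%N * g 2%N j + f i 3%N * g 3%N j).
Proof. by apply/matrixP => i j; rewrite !mxE !big_ord_recr big_ord0 /= add0r !mxE. Qed.

Lemma mx4_add {T : nmodType} (f g : nat -> nat -> T) :
  mx4 f + mx4 g = mx4 (fun i j => f i j + g i j).
Proof. by apply/matrixP => i j; rewrite !mxE. Qed.

Lemma mx4_opp {T : zmodType} (f : nat -> nat -> T) : - mx4 f = mx4 (fun i j => - f i j).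
Proof. by apply/matrixP => i j; rewrite !mxE. Qed.

Lemma mx4_scale {T : pzRingType} (a : T) (f : nat -> nat -> T) :
  a *: mx4 f = mx4 (fun i j => a * f i j).
Proof. by apply/matrixP => i j; rewrite !mxE. Qed.

Lemma mx4_tr {T : Type} (f : nat -> nat -> T) : (mx4 f)^T = mx4 (fun i j => f j i).
Proof. by apply/matrixP => i j; rewrite !mxE. Qed.

Lemma mx4_0 {T : nmodType} : (0 : 'M[T]_4) = mx4 (fun _ _ => 0).
Proof. by apply/matrixP => i j; rewrite !mxE. Qed.

Lemma mx4_1 {T : pzSemiRingType} : (1%:M : 'M[T]_4) = mx4 (fun i j => (i == j)%:R).
Proof. by apply/matrixP => i j; rewrite !mxE. Qed.

Lemma map_mx4 {T U : Type} (g : T -> U) (f : nat -> nat -> T) :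
  map_mx g (mx4 f) = mx4 (fun i j => g (f i j)).
Proof. by apply/matrixP => i j; rewrite !mxE. Qed.

Ltac mx4_entrywise :=
  apply: eq_mx4 => -[|[|[|[|?]]]] -[|[|[|[|?]]]] //= _ _.

Definition vk {T : Type} (v : 'rV[T]_4) (k : nat) : T := v ord0 (inord k).

Lemma vk_ext {T : Type} (v w : 'rV[T]_4) : (forall k, (k < 4)%N -> vk v k = vk w k) -> v = w.
Proof.
move=> vw; apply/matrixP => i j; rewrite (ord1 i).
by have := vw j (ltn_ord j); rewrite /vk inord_val.
Qed.

Lemma vk_row {T : Type} (g : nat -> T) k : (k < 4)%N -> vk (\row_(j < 4) g j) k = g k.
Proof. by move=> hk; rewrite /vk mxE inordK. Qed.

Lemma vk_scale {T : pzRingType} (a : T) (v : 'rV[T]_4) k : vk (a *: v) k = a * vk v k.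
Proof. by rewrite /vk mxE. Qed.

Lemma vk_mulmx {T : pzSemiRingType} (v : 'rV[T]_4) f k : (k < 4)%N ->
  vk (v *m mx4 f) k = vk v 0 * f 0%N k + vk v 1 * f 1%N k + vk v 2 * f 2%N k + vk v 3 * f 3%N k.
Proof.
move=> hk; rewrite /vk !mxE !big_ord_recr big_ord0 /= add0r !mxE inordK //.
by congr (_ * _ + _ * _ + _ * _ + _ * _); congr (v ord0 _); apply/val_inj; rewrite /= inordK.
Qed.

(* [kronJ m11 m12 m21 m22] is the Kronecker product M (x) J of
   M = [[m11, m12], [m21, m22]] with J = [[0, 1], [-1, 0]]: in the ordered basis
   (x1, y1, x2, y2) of the chart, the block (a, b) of M (x) J is m_ab J.  Every
   matrix occurring in the linearisation at a double pole has this form. *)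
Definition kronJ_entry {T : zmodType} (m11 m12 m21 m22 : T) (i j : nat) : T :=
  match i, j with
  | 0%N, 1%N => m11 | 1%N, 0%N => - m11 | 0%N, 3%N => m12 | 1%N, 2%N => - m12
  | 2%N, 1%N => m21 | 3%N, 0%N => - m21 | 2%N, 3%N => m22 | 3%N, 2%N => - m22
  | _, _ => 0 end.
Definition kronJ {T : zmodType} (m11 m12 m21 m22 : T) : 'M[T]_4 :=
  mx4 (kronJ_entry m11 m12 m21 m22).

Lemma kronJ_lin {T : comPzRingType} (c1 c2 x11 x12 x21 x22 y11 y12 y21 y22 : T) :
  c1 *: kronJ x11 x12 x21 x22 + c2 *: kronJ y11 y12 y21 y22 =
  kronJ (c1 * x11 + c2 * y11) (c1 * x12 + c2 * y12) (c1 * x21 + c2 * y21) (c1 * x22 + c2 * y22).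
Proof. by rewrite /kronJ !mx4_scale mx4_add; mx4_entrywise; ring. Qed.

Lemma map_kronJ {T U : zmodType} (f : {additive T -> U}) (m11 m12 m21 m22 : T) :
  map_mx f (kronJ m11 m12 m21 m22) = kronJ (f m11) (f m12) (f m21) (f m22).
Proof. by rewrite /kronJ map_mx4; mx4_entrywise; rewrite ?raddfN ?raddf0. Qed.

Section KronJSpectrum.
Variables (F : fieldType) (s : F).
Hypotheses (s2 : s ^+ 2 = -1) (two_neq0 : (2 : F) != 0).
Variables m11 m12 m21 m22 : F.

Definition charpoly2 (mu : F) : F :=
  mu ^+ 2 - (m11 + m22) * mu + (m11 * m22 - m12 * m21).

Let X := kronJ m11 m12 m21 m22.

Lemma kronJ_eigen_eqs (v : 'rV[F]_4) (l : F) : v *m X = l *: v ->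
  [/\ - m11 * vk v 1 - m21 * vk v 3 = l * vk v 0,
      m11 * vk v 0 + m21 * vk v 2 = l * vk v 1,
      - m12 * vk v 1 - m22 * vk v 3 = l * vk v 2 &
      m12 * vk v 0 + m22 * vk v 2 = l * vk v 3].
Proof.
move=> vX; have E k : (k < 4)%N -> vk (v *m X) k = l * vk v k by rewrite vX vk_scale.
have := E 0%N isT; have := E 1%N isT; have := E 2%N isT; have := E 3%N isT.
by rewrite !vk_mulmx //= !mulr0 !add0r !addr0 !mulrN => <- <- <- <-; split; ring.
Qed.

Lemma kronJ_eigen_charpoly {v : 'rV[F]_4} {l r : F} : r ^+ 2 = -1 -> v *m X = l *: v ->
  charpoly2 (r * l) * (vk v 0 - r * vk v 1) = 0 /\
  charpoly2 (r * l) * (vk v 2 - r * vk v 3) = 0.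
Proof.
move=> r2 /kronJ_eigen_eqs [e0 e1 e2 e3].
set mu := r * l; set y0 := vk v 0 - r * vk v 1; set y1 := vk v 2 - r * vk v 3.
have F0 : mu * y0 - m11 * y0 - m21 * y1 = 0.
  transitivity ((l * vk v 1 - (m11 * vk v 0 + m21 * vk v 2))
      + r * (l * vk v 0 - (- m11 * vk v 1 - m21 * vk v 3)) - (r ^+ 2 + 1) * (l * vk v 1)).
    by rewrite /mu /y0 /y1; ring.
  by rewrite e0 e1 r2; ring.
have F1 : mu * y1 - m12 * y0 - m22 * y1 = 0.
  transitivity ((l * vk v 3 - (m12 * vk v 0 + m22 * vk v 2))
      + r * (l * vk v 2 - (- m12 * vk v 1 - m22 * vk v 3)) - (r ^+ 2 + 1) * (l * vk v 3)).
    by rewrite /mu /y0 /y1; ring.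
  by rewrite e2 e3 r2; ring.
split.
- rewrite (_ : _ * y0 = (mu - m22) * (mu * y0 - m11 * y0 - m21 * y1)
                        + m21 * (mu * y1 - m12 * y0 - m22 * y1)); last by rewrite /charpoly2; ring.
  by rewrite F0 F1 !mulr0 addr0.
- rewrite (_ : _ * y1 = (mu - m11) * (mu * y1 - m12 * y0 - m22 * y1)
                        + m12 * (mu * y0 - m11 * y0 - m21 * y1)); last by rewrite /charpoly2; ring.
  by rewrite F0 F1 !mulr0 addr0.
Qed.

Lemma charpoly2_left_eigenvector (mu : F) : charpoly2 mu = 0 ->
  exists u0 u1 : F, [/\ m11 * u0 + m21 * u1 = mu * u0, m12 * u0 + m22 * u1 = mu * u1
                        & u0 != 0 \/ u1 != 0].
Proof.
move=> Q0; have Q0' : (mu - m11) * (mu - m22) - m12 * m21 = 0.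
  by rewrite -Q0 /charpoly2; ring.
have [nz1|z1] := boolP ((m21 != 0) || (mu - m11 != 0)).
  exists m21, (mu - m11); split; first by ring.
    by apply/eqP; rewrite -subr_eq0 -oppr_eq0; apply/eqP; rewrite -Q0'; ring.
  by apply/orP.
move: z1; rewrite negb_or !negbK subr_eq0 => /andP [/eqP m21_0 /eqP mu_m11].
have [nz2|z2] := boolP ((m12 != 0) || (mu - m22 != 0)).
  exists (mu - m22), m12; split; last by case/orP: nz2; [right | left].
    by rewrite m21_0 mu_m11; ring.
  by ring.
move: z2; rewrite negb_or !negbK subr_eq0 => /andP [/eqP m12_0 /eqP mu_m22].
exists 1, 0; split; last by left; exact: oner_neq0.
  by rewrite mu_m11; ring.
by rewrite m12_0 mu_m22; ring.
Qed.

Lemma kronJ_eigen_of_root {l r : F} : r ^+ 2 = -1 -> charpoly2 (r * l) = 0 ->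
  exists2 v : 'rV[F]_4, v *m X = l *: v & v != 0.
Proof.
move=> r2 /charpoly2_left_eigenvector [u0 [u1 [G0 G1 nz]]].
pose v := \row_(j < 4) nth 0 [:: u0; r * u0; u1; r * u1] j.
exists v.
  apply: vk_ext => k hk; rewrite vk_scale vk_mulmx //.
  case: k hk => [|[|[|[|k]]]] // _; rewrite /= !vk_row //=.
  - transitivity (- r * (m11 * u0 + m21 * u1) + (r ^+ 2 + 1) * (l * u0)).
      by rewrite r2; ring.
    by rewrite G0; ring.
  - by transitivity (m11 * u0 + m21 * u1); [ring | rewrite G0; ring].
  - transitivity (- r * (m12 * u0 + m22 * u1) + (r ^+ 2 + 1) * (l * u1)).
      by rewrite r2; ring.
    by rewrite G1; ring.
  - by transitivity (m12 * u0 + m22 * u1); [ring | rewrite G1; ring].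
apply/eqP => v0; case: nz => /eqP; apply.
  by have := congr1 (vk^~ 0%N) v0; rewrite /= vk_row // /vk mxE.
by have := congr1 (vk^~ 2%N) v0; rewrite /= vk_row // /vk mxE.
Qed.

Lemma kronJ_eigenvalue (l : F) :
  eigenvalue X l <-> charpoly2 (s * l) = 0 \/ charpoly2 (- s * l) = 0.
Proof.
have sN2 : (- s) ^+ 2 = -1 by rewrite sqrrN.
split; last first.
  by case=> [/(kronJ_eigen_of_root s2) | /(kronJ_eigen_of_root sN2)] ev; apply/eigenvalueP.
move=> /eigenvalueP [v vX vnz].
have [Q1|Q1] := eqVneq (charpoly2 (s * l)) 0; first by left.
have [Q2|Q2] := eqVneq (charpoly2 (- s * l)) 0; first by right.
exfalso; move/eqP: vnz; apply.
have cancel (Q y : F) : Q != 0 -> Q * y = 0 -> y = 0.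
  by move=> nQ /eqP; rewrite mulf_eq0 (negPf nQ) => /eqP.
have s_neq0 : s != 0.
  by apply/eqP => s0; move: s2; rewrite s0 expr0n /= => /eqP; rewrite eq_sym oppr_eq0 oner_eq0.
have both0 (x y : F) : x - s * y = 0 -> x - - s * y = 0 -> x = 0 /\ y = 0.
  move=> e1 e2; have x0 : x = 0.
    apply: (cancel _ _ two_neq0).
    by transitivity ((x - s * y) + (x - - s * y)); [ring | rewrite e1 e2 addr0].
  split => //; apply: (cancel _ _ s_neq0).
  by move: e1; rewrite x0 sub0r => /eqP; rewrite oppr_eq0 => /eqP.
have [a0 a2] := kronJ_eigen_charpoly s2 vX; have [b0 b2] := kronJ_eigen_charpoly sN2 vX.
have [v0 v1] := both0 _ _ (cancel _ _ Q1 a0) (cancel _ _ Q2 b0).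
have [v2 v3] := both0 _ _ (cancel _ _ Q1 a2) (cancel _ _ Q2 b2).
by apply: vk_ext => k hk; rewrite {2}/vk mxE; case: k hk => [|[|[|[|k]]]].
Qed.

Lemma kronJ_eigenvalue_roots (r1 r2 : F) :
  r1 + r2 = m11 + m22 -> r1 * r2 = m11 * m22 - m12 * m21 ->
  forall l, eigenvalue X l <-> [\/ l = - s * r1, l = - s * r2, l = s * r1 | l = s * r2].
Proof.
move=> sum12 prod12 l; rewrite kronJ_eigenvalue.
have factor mu : charpoly2 mu = (mu - r1) * (mu - r2).
  by rewrite /charpoly2 -sum12 -prod12; ring.
have solve (r mu : F) : r ^+ 2 = -1 -> (r * l - mu = 0 <-> l = - r * mu).
  move=> hr; split=> [/eqP | ->]; last by rewrite mulrA mulrN -expr2 hr opprK mul1r subrr.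
  by rewrite subr_eq0 => /eqP <-; rewrite mulrA mulNr -expr2 hr opprK mul1r.
have sN2 : (- s) ^+ 2 = -1 by rewrite sqrrN.
rewrite !factor; split.
  case=> /eqP; rewrite mulf_eq0 => /orP [] /eqP.
  - by move/(solve _ _ s2) => ->; constructor 1.
  - by move/(solve _ _ s2) => ->; constructor 2.
  - by move/(solve _ _ sN2); rewrite opprK => ->; constructor 3.
  - by move/(solve _ _ sN2); rewrite opprK => ->; constructor 4.
case=> e.
- by left; rewrite (proj2 (solve _ r1 s2) e) mul0r.
- by left; rewrite (proj2 (solve _ r2 s2) e) mulr0.
- by right; rewrite (proj2 (solve _ r1 sN2) ltac:(by rewrite opprK e)) mul0r.
- by right; rewrite (proj2 (solve _ r2 sN2) ltac:(by rewrite opprK e)) mulr0.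
Qed.
End KronJSpectrum.

Ltac complex_eq := apply/eqP; rewrite eq_complex /=; apply/andP; split; apply/eqP; ring.

Section RealKronJ.
Variable R : realType.
Local Open Scope complex_scope.

Lemma cplx_eigen_kronJ (m11 m12 m21 m22 : R) (r1 r2 : R[i]) :
  r1 + r2 = (m11 + m22)%:C -> r1 * r2 = (m11 * m22 - m12 * m21)%:C ->
  forall l, cplx_eigen (kronJ m11 m12 m21 m22) l <->
    [\/ l = - 'i * r1, l = - 'i * r2, l = 'i * r1 | l = 'i * r2].
Proof.
move=> sum12 prod12 l; rewrite /cplx_eigen.
have -> : map_mx (fun x : R => Complex x 0) (kronJ m11 m12 m21 m22) =
          kronJ m11%:C m12%:C m21%:C m22%:C by exact: (map_kronJ (real_complex R)).
apply: kronJ_eigenvalue_roots; first exact: sqr_i.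
- by rewrite pnatr_eq0.
- by rewrite sum12 rmorphD.
- by rewrite prod12 rmorphB !rmorphM.
Qed.

Lemma ell_ell_kronJ (n11 n12 n21 n22 al be : R) : 0 < al -> 0 < be -> al != be ->
  al + be = n11 + n22 -> al * be = n11 * n22 - n12 * n21 ->
  ell_ell_mx (kronJ n11 n12 n21 n22).
Proof.
move=> al_gt0 be_gt0 al_neq_be sum_ab prod_ab; exists al, be; split => //.
- by rewrite gt_eqF.
- by rewrite gt_eqF.
- by apply/eqP => e; move: (addr_gt0 al_gt0 be_gt0); rewrite e addNr ltxx.
move=> l; rewrite (@cplx_eigen_kronJ n11 n12 n21 n22 al%:C be%:C); last 2 first.
- by rewrite -rmorphD sum_ab.
- by rewrite -rmorphM prod_ab.
have -> : - 'i * al%:C = Complex 0 (- al) by complex_eq.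
have -> : - 'i * be%:C = Complex 0 (- be) by complex_eq.
have -> : 'i * al%:C = Complex 0 al by complex_eq.
have -> : 'i * be%:C = Complex 0 be by complex_eq.
by split=> [[] -> | [|[|[|]]] ->];
  by [left | right; left | right; right; left | right; right; right
     | constructor 1 | constructor 2 | constructor 3 | constructor 4].
Qed.

Lemma focus_focus_kronJ (n11 n12 n21 n22 p q : R) : p != 0 -> q != 0 ->
  2 * p = n11 + n22 -> p ^+ 2 + q ^+ 2 = n11 * n22 - n12 * n21 ->
  focus_focus_mx (kronJ n11 n12 n21 n22).
Proof.
move=> p_neq0 q_neq0 sum_pq prod_pq; exists q, p; split => //.
move=> l; rewrite (@cplx_eigen_kronJ n11 n12 n21 n22 (p%:C + 'i * q%:C) (p%:C - 'i * q%:C)); last 2 first.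
- by rewrite -sum_pq; complex_eq.
- by rewrite -prod_pq; complex_eq.
have -> : - 'i * (p%:C + 'i * q%:C) = Complex q (- p) by complex_eq.
have -> : - 'i * (p%:C - 'i * q%:C) = Complex (- q) (- p) by complex_eq.
have -> : 'i * (p%:C + 'i * q%:C) = Complex (- q) p by complex_eq.
have -> : 'i * (p%:C - 'i * q%:C) = Complex q p by complex_eq.
by split=> [[] -> | [|[|[|]]] ->];
  by [left | right; left | right; right; left | right; right; right
     | constructor 1 | constructor 2 | constructor 3 | constructor 4].
Qed.
End RealKronJ.

(* [kronIJ A B] = A (x) I + B (x) J for 2x2 matrices A = (a_ij), B = (b_ij):
   the 4x4 matrices commuting with I (x) J. *)
Definition kronIJ_entry {T : zmodType} (a11 a12 a21 a22 b11 b12 b21 b22 : T) (i j : nat) : T :=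
  match i, j with
  | 0%N, 0%N => a11 | 0%N, 1%N => b11 | 1%N, 0%N => - b11 | 1%N, 1%N => a11
  | 0%N, 2%N => a12 | 0%N, 3%N => b12 | 1%N, 2%N => - b12 | 1%N, 3%N => a12
  | 2%N, 0%N => a21 | 2%N, 1%N => b21 | 3%N, 0%N => - b21 | 3%N, 1%N => a21
  | 2%N, 2%N => a22 | 2%N, 3%N => b22 | 3%N, 2%N => - b22 | 3%N, 3%N => a22
  | _, _ => 0 end.
Definition kronIJ {T : zmodType} (a11 a12 a21 a22 b11 b12 b21 b22 : T) : 'M[T]_4 :=
  mx4 (kronIJ_entry a11 a12 a21 a22 b11 b12 b21 b22).

Lemma kronJ_kronIJ {T : zmodType} (m11 m12 m21 m22 : T) :
  kronJ m11 m12 m21 m22 = kronIJ 0 0 0 0 m11 m12 m21 m22.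
Proof. by mx4_entrywise. Qed.

Lemma kronIJ_inj {T : zmodType} (a11 a12 a21 a22 b11 b12 b21 b22 : T)
    (c11 c12 c21 c22 d11 d12 d21 d22 : T) :
  kronIJ a11 a12 a21 a22 b11 b12 b21 b22 = kronIJ c11 c12 c21 c22 d11 d12 d21 d22 ->
  [/\ a11 = c11, a12 = c12, a21 = c21, a22 = c22 &
      [/\ b11 = d11, b12 = d12, b21 = d21 & b22 = d22]].
Proof.
move/mx4_inj => E; split; [exact: (E 0 0)%N | exact: (E 0 2)%N | exact: (E 2 0)%N
  | exact: (E 2 2)%N | split; [exact: (E 0 1)%N | exact: (E 0 3)%N | exact: (E 2 1)%N
  | exact: (E 2 3)%N]].
Qed.

(* [A (x) I + B (x) J, K (x) J] = [A, K] (x) J - [B, K] (x) I, since J^2 = -1. *)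
Lemma lie_kronIJ_kronJ {R : realType} (a11 a12 a21 a22 b11 b12 b21 b22 : R)
    (k11 k12 k21 k22 : R) :
  lie (kronIJ a11 a12 a21 a22 b11 b12 b21 b22) (kronJ k11 k12 k21 k22) =
  kronIJ (- (b12 * k21 - k12 * b21)) (- (b11 * k12 + b12 * k22 - k11 * b12 - k12 * b22))
         (- (b21 * k11 + b22 * k21 - k21 * b11 - k22 * b21)) (- (b21 * k12 - k21 * b12))
         (a12 * k21 - k12 * a21) (a11 * k12 + a12 * k22 - k11 * a12 - k12 * a22)
         (a21 * k11 + a22 * k21 - k21 * a11 - k22 * a21) (a21 * k12 - k21 * a12).
Proof. by rewrite /lie /kronIJ /kronJ !mx4_mul mx4_opp mx4_add; mx4_entrywise; ring. Qed.

(* The symplectic Lie algebra of Omega = diag(a, b) (x) J on matrices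
   A (x) I + B (x) J: A must be Omega-antisymmetric and B Omega-symmetric. *)
Lemma in_sp_kronIJ {R : realType} (a b a11 a12 a21 a22 b11 b12 b21 b22 : R) :
  in_sp (kronJ a 0 0 b) (kronIJ a11 a12 a21 a22 b11 b12 b21 b22) <->
  [/\ a * a11 = 0, b * a22 = 0, a * a12 + b * a21 = 0 & b * b21 - a * b12 = 0].
Proof.
rewrite /in_sp /kronJ /kronIJ mx4_tr !mx4_mul mx4_add mx4_0.
split=> [/mx4_inj E | [e1 e2 e3 e4]]; last by mx4_entrywise; lra.
have := E 0 1 isT isT; have := E 2 3 isT isT; have := E 0 3 isT isT; have := E 0 2 isT isT.
by rewrite /=; split; lra.
Qed.

Lemma in_sp_kronJ {R : realType} (a b m11 m12 m21 m22 : R) :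
  a * m12 = b * m21 -> in_sp (kronJ a 0 0 b) (kronJ m11 m12 m21 m22).
Proof. by move=> abm; rewrite (kronJ_kronIJ m11) in_sp_kronIJ; split; lra. Qed.

(* There Omega = diag(a, b) (x) J,
   A_L = - I (x) J and A_H = K (x) J with K = (k_ij) in sp(Omega). *)
Section Cartan.
Context {R : realType}.
Variables (k11 k12 k21 k22 : R).
Let AL := kronJ (-1 : R) 0 0 (-1).
Let AH := kronJ k11 k12 k21 k22.

Definition disc2 : R := (k11 - k22) ^+ 2 + 4 * k12 * k21.

Lemma span_AL : span2 AL AH AL.
Proof. by exists 1, 0; rewrite scale1r scale0r addr0. Qed.

Lemma span_AH : span2 AL AH AH.
Proof. by exists 0, 1; rewrite scale1r scale0r add0r. Qed.

Lemma span_kronJ (c1 c2 : R) :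
  c1 *: AL + c2 *: AH = kronJ (- c1 + c2 * k11) (c2 * k12) (c2 * k21) (- c1 + c2 * k22).
Proof. by rewrite /AL /AH kronJ_lin; congr kronJ; ring. Qed.

(* The span is abelian: - I and K commute. *)
Lemma lie_span (c1 c2 d1 d2 : R) : lie (c1 *: AL + c2 *: AH) (d1 *: AL + d2 *: AH) = 0.
Proof.
rewrite !span_kronJ /lie /kronJ !mx4_mul mx4_opp mx4_add mx4_0.
by mx4_entrywise; ring.
Qed.

(* If [X, A_L] lies in the span, then X commutes with I (x) J,
   i.e. X = A (x) I + B (x) J. *)
Lemma normalizer_AL_shape (x : nat -> nat -> R) (al be : R) :
  lie (mx4 x) AL = al *: AL + be *: AH ->
  mx4 x = kronIJ (x 0 0)%N (x 0 2)%N (x 2 0)%N (x 2 2)%N (x 0 1)%N (x 0 3)%N (x 2 1)%N (x 2 3)%N.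
Proof.
rewrite span_kronJ /lie /AL /kronJ !mx4_mul mx4_opp mx4_add => /mx4_inj E.
have := E 0 0 isT isT; have := E 0 1 isT isT; have := E 0 2 isT isT; have := E 0 3 isT isT.
have := E 1 0 isT isT; have := E 1 1 isT isT; have := E 1 2 isT isT; have := E 1 3 isT isT.
have := E 2 0 isT isT; have := E 2 1 isT isT; have := E 2 2 isT isT; have := E 2 3 isT isT.
have := E 3 0 isT isT; have := E 3 1 isT isT; have := E 3 2 isT isT; have := E 3 3 isT isT.
rewrite /= => *; rewrite /kronIJ; mx4_entrywise; lra.
Qed.

(* An element A (x) I of sp(Omega) whose bracket [A, K] (x) J with K (x) J
   lies in the span is zero, provided K has distinct eigenvalues. *)
Lemma normalizer_A_part_zero {a b al be a11 a12 a21 a22 : R} :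
  a != 0 -> b != 0 -> a * k12 = b * k21 -> disc2 != 0 ->
  [/\ a * a11 = 0, b * a22 = 0 & a * a12 + b * a21 = 0] ->
  [/\ a12 * k21 - k12 * a21 = - al + be * k11,
      a11 * k12 + a12 * k22 - k11 * a12 - k12 * a22 = be * k12 &
      a21 * k12 - k21 * a12 = - al + be * k22] ->
  [/\ a11 = 0, a12 = 0, a21 = 0 & a22 = 0].
Proof.
move=> a_neq0 b_neq0 K_sp disc_neq0 [t1 t2 t3] [s1 s2 s3].
have a11_0 : a11 = 0 by move/eqP: t1; rewrite mulf_eq0 (negPf a_neq0) => /eqP.
have a22_0 : a22 = 0 by move/eqP: t2; rewrite mulf_eq0 (negPf b_neq0) => /eqP.
have a12_0 : a12 = 0.
  have : b * a12 * disc2 = 0.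
    transitivity (- 2 * a12 * k12 * (a * k12 - b * k21) + 2 * k12 ^+ 2 * (a * a12 + b * a21)
      + b * k12 * ((a12 * k21 - k12 * a21 + al - be * k11) - (a21 * k12 - k21 * a12 + al - be * k22))
      - b * (k11 - k22) * ((a11 * k12 + a12 * k22 - k11 * a12 - k12 * a22) - be * k12)
      + b * (k11 - k22) * k12 * (a11 - a22)); first by rewrite /disc2; ring.
    by rewrite K_sp t3 s1 s2 s3 a11_0 a22_0; ring.
  by move/eqP; rewrite !mulf_eq0 (negPf b_neq0) (negPf disc_neq0) orbF => /eqP.
have a21_0 : a21 = 0.
  by move: t3; rewrite a12_0 mulr0 add0r => /eqP; rewrite mulf_eq0 (negPf b_neq0) => /eqP.
by split.
Qed.

(* A matrix B commuting with K is a polynomial B = al I + be K in K,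
   provided K has distinct eigenvalues; then B (x) J lies in the span. *)
Lemma commutant_in_span (b11 b12 b21 b22 : R) : disc2 != 0 ->
  b12 * k21 - k12 * b21 = 0 ->
  b11 * k12 + b12 * k22 - k11 * b12 - k12 * b22 = 0 ->
  b21 * k11 + b22 * k21 - k21 * b11 - k22 * b21 = 0 ->
  span2 AL AH (kronJ b11 b12 b21 b22).
Proof.
move=> disc_neq0 c1 c2 c3.
have [k12_0|k12_neq0] := eqVneq k12 0.
  (* then disc2 != 0 means k11 != k22, and B = al I + be K with
     be = (b11 - b22) / (k11 - k22) *)
  have kd : k11 - k22 != 0.
    by apply: contraNneq disc_neq0 => kd; rewrite /disc2 kd k12_0 mulr0 mul0r addr0 expr0n.
  have b12_0 : b12 = 0.
    by apply: (mulIf kd); rewrite mul0r; move: c2; rewrite k12_0; lra.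
  have b21E : b21 * (k11 - k22) = k21 * (b11 - b22) by lra.
  exists ((b11 - b22) / (k11 - k22) * k11 - b11), ((b11 - b22) / (k11 - k22)).
  rewrite span_kronJ k12_0 b12_0 mulr0; congr kronJ; try by field.
  by rewrite -(mulfK kd b21) b21E; field.
have b21E : b21 = b12 * k21 / k12 by rewrite -(mulfK k12_neq0 b21); congr (_ / _); lra.
have b22E : b22 = (b11 * k12 + b12 * k22 - k11 * b12) / k12.
  by rewrite -(mulfK k12_neq0 b22); congr (_ / _); lra.
exists (- (b11 - b12 / k12 * k11)), (b12 / k12).
by rewrite span_kronJ b21E b22E; congr kronJ; field.
Qed.

Lemma cartan_of_disc (a b : R) : a != 0 -> b != 0 -> a * k12 = b * k21 ->
  disc2 != 0 -> cartan_span (kronJ a 0 0 b) AL AH.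
Proof.
move=> a_neq0 b_neq0 K_sp disc_neq0; split.
- move=> X [c1 [c2 ->]]; rewrite span_kronJ; apply: in_sp_kronJ.
  by rewrite mulrCA K_sp mulrCA.
- by move=> X Y [c1 [c2 ->]] [d1 [d2 ->]]; exists 0, 0; rewrite lie_span !scale0r addr0.
- exists 1%N => x s x_span s_span; case: s s_span => [|y [|z s]] //= s_span _.
  have [d1 [d2 ->]] := s_span y (mem_head _ _); have [c1 [c2 ->]] := x_span.
  exact: lie_span.
move=> X X_sp X_norm; rewrite (mx4_entries X) in X_sp X_norm *.
have [al [be /normalizer_AL_shape X_shape]] := X_norm _ span_AL.
rewrite X_shape /= in X_sp X_norm *.
have [al' [be']] := X_norm _ span_AH.
rewrite span_kronJ /AH lie_kronIJ_kronJ kronJ_kronIJ => /kronIJ_inj.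
move=> [B1 B2 B3 _ [A1 A2 _ A4]].
have /in_sp_kronIJ [t1 t2 t3 _] := X_sp.
have [-> -> -> ->] := normalizer_A_part_zero (al := al') (be := be') a_neq0 b_neq0 K_sp disc_neq0
  (And3 t1 t2 t3) (And3 A1 A2 A4).
by rewrite -kronJ_kronIJ; apply: commutant_in_span => //; lra.
Qed.

(* When disc2 = 0 (and k12 != 0) the span is not self-normalizing: the
   element A0 (x) I with A0 = [[0, b], [-a, 0]] of sp(Omega) normalizes it. *)
Lemma not_cartan_of_disc (a b : R) : a != 0 -> b != 0 -> a * k12 = b * k21 ->
  disc2 = 0 -> k12 != 0 -> ~ cartan_span (kronJ a 0 0 b) AL AH.
Proof.
move=> a_neq0 b_neq0 K_sp disc_0 k12_neq0 [_ _ _ self_norm].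
pose X0 := kronIJ 0 b (- a) 0 0 0 0 0.
have X0_sp : in_sp (kronJ a 0 0 b) X0 by apply/in_sp_kronIJ; split; ring.
have X0_norm : forall Y, span2 AL AH Y -> span2 AL AH (lie X0 Y).
  move=> Y [c1 [c2 ->]]; rewrite span_kronJ lie_kronIJ_kronJ.
  set d := k11 - k22.
  have d2 : d ^+ 2 = - 4 * k12 * k21 by move: disc_0; rewrite /disc2 -/d; lra.
  pose be := - b * c2 * d / k12.
  exists (be * k11 - c2 * (b * k21 + a * k12)), be.
  have aE : a = b * k21 / k12 by rewrite -K_sp mulfK.
  rewrite span_kronJ kronJ_kronIJ; congr kronIJ; rewrite /be; try by rewrite /d; field.
  - by rewrite aE /d; field.
  - symmetry; transitivity (b * c2 * d ^+ 2 / k12 + c2 * (b * k21 + a * k12)).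
      by rewrite /d; field.
    by rewrite d2 aE; field.
have [al [be]] := self_norm X0 X0_sp X0_norm.
rewrite span_kronJ kronJ_kronIJ => /kronIJ_inj [_ /eqP + _ _ _].
by rewrite (negPf b_neq0).
Qed.

(* If disc2 > 0, then K has distinct real eigenvalues; shifting K by a large
   multiple c of the identity makes both positive, so c A_L + A_H is
   elliptic-elliptic. *)
Lemma ell_ell_of_disc : 0 < disc2 ->
  exists c1 c2 : R, ell_ell_mx (c1 *: AL + c2 *: AH).
Proof.
move=> disc_gt0; set tr := k11 + k22; set sq := Num.sqrt disc2.
have sq_gt0 : 0 < sq by rewrite sqrtr_gt0.
have sq2 : sq ^+ 2 = disc2 by rewrite sqr_sqrtr // ltW.
have tr_ge : - `|tr| <= tr by rewrite lerNnormlW.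
have tr_abs := normr_ge0 tr.
set c := `|tr| + sq + 1.
exists (- c), 1; rewrite span_kronJ.
apply: (@ell_ell_kronJ _ _ _ _ _ (c + (tr + sq) / 2) (c + (tr - sq) / 2)).
- by rewrite /c; lra.
- by rewrite /c; lra.
- apply/eqP => e; have sq0 : sq = 0 by lra.
  by move: sq_gt0; rewrite sq0 ltxx.
- by rewrite /tr; field.
- transitivity ((c + tr / 2) ^+ 2 - sq ^+ 2 / 4); first by rewrite /tr; field.
  by rewrite sq2 /disc2 /tr; field.
Qed.

(* If disc2 < 0, then K has non-real eigenvalues; after a shift making their
   real part nonzero, c A_L + A_H is focus-focus. *)
Lemma focus_focus_of_disc : disc2 < 0 ->
  exists c1 c2 : R, focus_focus_mx (c1 *: AL + c2 *: AH).
Proof.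
move=> disc_lt0; set tr := k11 + k22; set sq := Num.sqrt (- disc2).
have sq_gt0 : 0 < sq by rewrite sqrtr_gt0 oppr_gt0.
have sq2 : sq ^+ 2 = - disc2 by rewrite sqr_sqrtr // ltW // oppr_gt0.
have tr_ge : - `|tr| <= tr by rewrite lerNnormlW.
have tr_abs := normr_ge0 tr.
set c := `|tr| + 1.
exists (- c), 1; rewrite span_kronJ.
apply: (@focus_focus_kronJ _ _ _ _ _ (c + tr / 2) (sq / 2)).
- by apply/eqP => e; move: tr_ge; rewrite /c in e; lra.
- apply/eqP => e; have sq0 : sq = 0 by lra.
  by move: sq_gt0; rewrite sq0 ltxx.
- by rewrite /tr; field.
- transitivity ((c + tr / 2) ^+ 2 + sq ^+ 2 / 4); first by rewrite /tr; field.
  by rewrite sq2 /disc2 /tr; field.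
Qed.
End Cartan.

Section DirectionalDerivative.
Context {R : realType} {V : normedModType R}.

Lemma is_derive_line (f : V -> R) (x v : V) (d : R) :
  is_derive x v f d <-> is_derive (0 : R) 1 (fun h : R => f (h *: v + x)) d.
Proof.
have quot : (fun h : R => h^-1 *: ((f \o shift x) (h *: v) - f x)) =
    (fun h : R => h^-1 *: (((fun h : R => f (h *: v + x)) \o shift 0) (h *: 1)
                           - (fun h : R => f (h *: v + x)) 0)).
  by apply/funext => h /=; rewrite scale0r add0r addr0 [h *: 1]mulr1.
have E1 : derivable f x v = derivable (fun h : R => f (h *: v + x)) 0 1 by rewrite /derivable quot.
have E2 : 'D_v f x = 'D_1 (fun h : R => f (h *: v + x)) 0 by rewrite /derive quot.
by split=> -[d1 d2]; constructor; rewrite ?E1 ?E2 // -?E1 -?E2.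
Qed.

Lemma is_derive_post {f : V -> R} {g : R -> R} {x v : V} {df dg : R} :
  is_derive x v f df -> is_derive (f x) 1 g dg -> is_derive x v (fun y => g (f y)) (dg * df).
Proof.
move=> /is_derive_line f_der g_der; apply/is_derive_line.
have g_der' : is_derive ((fun h : R => f (h *: v + x)) 0) 1 g dg by rewrite /= scale0r add0r.
exact: (is_derive1_comp g_der' f_der).
Qed.

Lemma is_derive_sqrt {f : V -> R} {x v : V} {df : R} : 0 < f x -> is_derive x v f df ->
  is_derive x v (fun y => Num.sqrt (f y)) ((2 * Num.sqrt (f x))^-1 * df).
Proof. by move=> fx_gt0 f_der; apply: is_derive_post => //; exact: is_derive1_sqrt. Qed.

Lemma is_derive_ln {f : V -> R} {x v : V} {df : R} : 0 < f x -> is_derive x v f df ->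
  is_derive x v (fun y => ln (f y)) ((f x)^-1 * df).
Proof. by move=> fx_gt0 f_der; apply: is_derive_post => //; exact: is_derive1_ln. Qed.

Lemma is_derive_inv {f : V -> R} {x v : V} {df : R} : f x != 0 -> is_derive x v f df ->
  is_derive x v (fun y => (f y)^-1) (- (f x) ^- 2 * df).
Proof.
move=> fx_neq0 f_der; apply: is_derive_post => //.
have inv_der := @is_deriveV R (fun y => y) (f x) 1 1 fx_neq0 (is_derive_id _ _).
by apply: is_derive_eq inv_der _; rewrite [_ *: _]mulr1.
Qed.
End DirectionalDerivative.

Global Instance is_derive_coord (R : realType) (n : nat) (x v : 'rV[R]_n) (k : 'I_n) :
  is_derive x v (fun u : 'rV[R]_n => u ord0 k) (v ord0 k).
Proof.
apply/is_derive_line.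
have -> : (fun h : R => (h *: v + x) ord0 k) = (fun h : R => h * v ord0 k + x ord0 k).
  by apply/funext => h; rewrite !mxE.
by apply: is_derive_eq; rewrite scaler0 add0r addr0 [_%:A]mulr1.
Qed.

(* Each
   sphere is the graph of z = +- cap over its (x, y)-disc, with
   cap = sqrt(1 - x^2 - y^2); we compute the first derivatives of L and H in
   the chart near the origin and their second derivatives at the origin. *)
Section ChartCalculus.
Context {R : realType}.
Implicit Types (x v w : 'rV[R]_4) (i j : nat).

Definition rad i j (u : 'rV[R]_4) : R := 1 - cu u i ^+ 2 - cu u j ^+ 2.
Definition drad i j x v : R := - (2 * cu x i * cu v i + 2 * cu x j * cu v j).
Definition cap i j (u : 'rV[R]_4) : R := Num.sqrt (rad i j u).
Definition dcap i j x v : R := (2 * cap i j x)^-1 * drad i j x v.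

Lemma is_derive_cu x v k : is_derive x v (fun u => cu u k) (cu v k).
Proof. exact: is_derive_coord. Qed.

Lemma is_derive_rad i j x v : is_derive x v (rad i j) (drad i j x v).
Proof.
have := is_derive_cu x v i; have := is_derive_cu x v j => dj di.
by rewrite /rad /drad; apply: is_derive_eq; rewrite /GRing.scale /=; ring.
Qed.

Lemma is_derive_drad i j x v w : is_derive x w (fun y => drad i j y v) (drad i j w v).
Proof.
have := is_derive_cu x w i; have := is_derive_cu x w j => dj di.
by rewrite /drad; apply: is_derive_eq; rewrite /GRing.scale /=; ring.
Qed.

Lemma is_derive_cap i j x v : 0 < rad i j x -> is_derive x v (cap i j) (dcap i j x v).
Proof. by move=> rad_gt0; apply: is_derive_sqrt => //; exact: is_derive_rad. Qed.

Lemma cu0 k : cu (0 : 'rV[R]_4) k = 0. Proof. by rewrite /cu mxE. Qed.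
Lemma rad0 i j : rad i j 0 = 1. Proof. by rewrite /rad !cu0 expr0n /= !subr0. Qed.
Lemma cap0 i j : cap i j 0 = 1. Proof. by rewrite /cap rad0 sqrtr1. Qed.
Lemma drad0 i j v : drad i j 0 v = 0.
Proof. by rewrite /drad !cu0 !mulr0 !mul0r addr0 oppr0. Qed.

Lemma is_derive_cap0 i j w : is_derive 0 w (cap i j) 0.
Proof.
have rad_gt0 : 0 < rad i j 0 by rewrite rad0.
by have := is_derive_cap i j 0 w rad_gt0; rewrite /dcap drad0 mulr0.
Qed.

Lemma dcap0 i j v : dcap i j 0 v = 0.
Proof. by rewrite /dcap drad0 mulr0. Qed.

Lemma is_derive_dcap0 i j v w :
  is_derive 0 w (fun q => dcap i j q v) (- (cu w i * cu v i + cu w j * cu v j)).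
Proof.
have cap_der := is_derive_cap0 i j w.
have two_cap_der : is_derive 0 w (fun q => 2 * cap i j q) (2 * 0).
  by apply: is_derive_eq; rewrite /GRing.scale /= mulr0.
have two_cap_neq0 : 2 * cap i j 0 != 0 by rewrite cap0 mulr1 pnatr_eq0.
have inv_der := is_derive_inv (f := fun q => 2 * cap i j q) two_cap_neq0 two_cap_der.
have drad_der := is_derive_drad i j 0 v w.
rewrite /dcap; apply: is_derive_eq.
by rewrite /GRing.scale /= cap0 drad0 /drad; field.
Qed.

Lemma is_derive_dlncap0 i j v w :
  is_derive 0 w (fun q => (cap i j q)^-1 * dcap i j q v) (- (cu w i * cu v i + cu w j * cu v j)).
Proof.
have cap_neq0 : cap i j 0 != 0 by rewrite cap0 oner_neq0.
have inv_der := is_derive_inv cap_neq0 (is_derive_cap0 i j w).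
have dcap_der := is_derive_dcap0 i j v w.
apply: is_derive_eq.
by rewrite /GRing.scale /= cap0 dcap0 invr1; ring.
Qed.

Lemma near0_rad_gt0 i j : \forall q \near (0 : 'rV[R]_4), 0 < rad i j q.
Proof.
have sq_diff k : differentiable (fun u : 'rV[R]_4 => cu u k ^+ 2) 0.
  have -> : (fun u : 'rV[R]_4 => cu u k ^+ 2) = (fun u => cu u k) * (fun u => cu u k).
    by apply/funext => u; rewrite /= expr2.
  by apply: differentiableM; exact: differentiable_coord.
have rad_cont : {for (0 : 'rV[R]_4), continuous (rad i j)}.
  apply: differentiable_continuous; rewrite /rad.
  by apply: differentiableB; [apply: differentiableB; [exact: differentiable_cst|] |].
by have := @cvgr_gt _ _ _ _ _ (rad i j 0) rad_cont 0; rewrite rad0; apply.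
Qed.
End ChartCalculus.

(* L and H read in the chart of the double pole p_{e1,e2}, with s_k = sgn e_k,
   and their first derivatives off the equators. *)
Section PoleChart.
Context {R : realType}.
Variables (R1 R2 t s1 s2 : R).
Implicit Types (x v w : 'rV[R]_4).

Definition L_chart (u : 'rV[R]_4) : R := R1 * ln (cap 0 1 u) + R2 * (s2 * cap 2 3 u).
Definition H_chart (u : 'rV[R]_4) : R := (1 - t) * ln (cap 0 1 u) +
  t * (cu u 0 * cu u 2 + cu u 1 * cu u 3 + (s1 * cap 0 1 u) * (s2 * cap 2 3 u)).

Definition dL_chart x v : R :=
  R1 * ((cap 0 1 x)^-1 * dcap 0 1 x v) + R2 * (s2 * dcap 2 3 x v).
Definition dH_chart x v : R := (1 - t) * ((cap 0 1 x)^-1 * dcap 0 1 x v) +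
  t * (cu x 0 * cu v 2 + cu v 0 * cu x 2 + cu x 1 * cu v 3 + cu v 1 * cu x 3
       + s1 * s2 * (cap 0 1 x * dcap 2 3 x v + cap 2 3 x * dcap 0 1 x v)).

Lemma is_derive_L_chart x v : 0 < rad 0 1 x -> 0 < rad 2 3 x ->
  is_derive x v L_chart (dL_chart x v).
Proof.
move=> rad1_gt0 rad2_gt0.
have cap1_gt0 : 0 < cap 0 1 x by rewrite sqrtr_gt0.
have ln_der := is_derive_ln cap1_gt0 (is_derive_cap 0 1 x v rad1_gt0).
have cap2_der := is_derive_cap 2 3 x v rad2_gt0.
by rewrite /L_chart /dL_chart; apply: is_derive_eq; rewrite /GRing.scale /=; ring.
Qed.

Lemma is_derive_H_chart x v : 0 < rad 0 1 x -> 0 < rad 2 3 x ->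
  is_derive x v H_chart (dH_chart x v).
Proof.
move=> rad1_gt0 rad2_gt0.
have cap1_gt0 : 0 < cap 0 1 x by rewrite sqrtr_gt0.
have ln_der := is_derive_ln cap1_gt0 (is_derive_cap 0 1 x v rad1_gt0).
have cap1_der := is_derive_cap 0 1 x v rad1_gt0.
have cap2_der := is_derive_cap 2 3 x v rad2_gt0.
have := is_derive_cu x v 0; have := is_derive_cu x v 1.
have := is_derive_cu x v 2; have := is_derive_cu x v 3 => d3 d2 d1 d0.
by rewrite /H_chart /dH_chart; apply: is_derive_eq; rewrite /GRing.scale /=; ring.
Qed.

Lemma is_derive_dL_chart0 v w : is_derive 0 w (fun q => dL_chart q v)
  (- R1 * (cu w 0 * cu v 0 + cu w 1 * cu v 1) - R2 * s2 * (cu w 2 * cu v 2 + cu w 3 * cu v 3)).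
Proof.
have := is_derive_dlncap0 0 1 v w; have := is_derive_dcap0 2 3 v w => d2 d1.
by rewrite /dL_chart; apply: is_derive_eq; rewrite /GRing.scale /=; ring.
Qed.

Lemma is_derive_dH_chart0 v w : is_derive 0 w (fun q => dH_chart q v)
  (- (1 - t) * (cu w 0 * cu v 0 + cu w 1 * cu v 1)
   + t * (cu w 0 * cu v 2 + cu w 2 * cu v 0 + cu w 1 * cu v 3 + cu w 3 * cu v 1)
   - t * s1 * s2 * (cu w 0 * cu v 0 + cu w 1 * cu v 1 + cu w 2 * cu v 2 + cu w 3 * cu v 3)).
Proof.
have := is_derive_dlncap0 0 1 v w; have := is_derive_dcap0 0 1 v w.
have := is_derive_dcap0 2 3 v w; have := is_derive_cap0 0 1 w.
have := is_derive_cap0 2 3 w => c2 c1 dc2 dc1 dl1.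
have := is_derive_cu 0 w 0; have := is_derive_cu 0 w 1.
have := is_derive_cu 0 w 2; have := is_derive_cu 0 w 3 => d3 d2 d1 d0.
rewrite /dH_chart; apply: is_derive_eq.
by rewrite /GRing.scale /= !cap0 !dcap0 !cu0; ring.
Qed.

(* The Hessians at the origin, computed from the first derivatives, which are
   valid on a neighbourhood of the origin. *)
Lemma hess_L_chart v w : 'D_w (fun q => 'D_v L_chart q) 0 =
  - R1 * (cu w 0 * cu v 0 + cu w 1 * cu v 1) - R2 * s2 * (cu w 2 * cu v 2 + cu w 3 * cu v 3).
Proof.
have E : \forall q \near (0 : 'rV[R]_4), 'D_v L_chart q = dL_chart q v.
  by near=> q; apply: derive_val; apply: is_derive_L_chart; near: q; exact: near0_rad_gt0.
by rewrite (near_eq_derive w E); case: (is_derive_dL_chart0 v w).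
Unshelve. all: by end_near.
Qed.

Lemma hess_H_chart v w : 'D_w (fun q => 'D_v H_chart q) 0 =
  - (1 - t) * (cu w 0 * cu v 0 + cu w 1 * cu v 1)
   + t * (cu w 0 * cu v 2 + cu w 2 * cu v 0 + cu w 1 * cu v 3 + cu w 3 * cu v 1)
   - t * s1 * s2 * (cu w 0 * cu v 0 + cu w 1 * cu v 1 + cu w 2 * cu v 2 + cu w 3 * cu v 3).
Proof.
have E : \forall q \near (0 : 'rV[R]_4), 'D_v H_chart q = dH_chart q v.
  by near=> q; apply: derive_val; apply: is_derive_H_chart; near: q; exact: near0_rad_gt0.
by rewrite (near_eq_derive w E); case: (is_derive_dH_chart0 v w).
Unshelve. all: by end_near.
Qed.
End PoleChart.

Lemma co_mkpt {R : realType} (x1 y1 z1 x2 y2 z2 : R) k : (k < 6)%N ->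
  co (mkpt x1 y1 z1 x2 y2 z2) k = nth 0 [:: x1; y1; z1; x2; y2; z2] k.
Proof. by move=> hk; rewrite /co /mkpt mxE inordK. Qed.

Lemma sgn_neq0 {R : realType} (e : bool) : sgn R e != 0.
Proof. by case: e; rewrite /sgn ?oppr_eq0 oner_eq0. Qed.

Lemma sgn_sqr {R : realType} (e : bool) : sgn R e ^+ 2 = 1.
Proof. by case: e; rewrite /sgn ?sqrrN expr1n. Qed.

Lemma normr_sgn {R : realType} (e : bool) : `|sgn R e| = 1.
Proof. by case: e; rewrite /sgn ?normrN normr1. Qed.

Section PoleLinearisation.
Context {R : realType}.
Variables (R1 R2 t : R) (e1 e2 : bool).

Lemma L_in_chart : (fun u => Defs.Lfun R1 R2 (chart e1 e2 u)) = L_chart R1 R2 (sgn R e2).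
Proof.
apply/funext => u; rewrite /Defs.Lfun /bfun /cL /gL /chart !co_mkpt //= /L_chart.
by rewrite normrM normr_sgn mul1r ger0_norm // sqrtr_ge0.
Qed.

Lemma H_in_chart : (fun u => Defs.Hfun t (chart e1 e2 u)) = H_chart t (sgn R e1) (sgn R e2).
Proof.
apply/funext => u; rewrite /Defs.Hfun /bfun /cH /gH /chart !co_mkpt //= /H_chart.
by rewrite normrM normr_sgn mul1r ger0_norm // sqrtr_ge0.
Qed.

Let dl (i k : nat) : R := (i == k)%:R.

Lemma cu_delta (i : 'I_4) k : (k < 4)%N -> cu (delta_mx ord0 i : 'rV[R]_4) k = dl i k.
Proof. by move=> hk; rewrite /cu mxE eqxx /= /dl -val_eqE /= inordK // eq_sym. Qed.

Lemma hess0_L : hess0 (fun u => Defs.Lfun R1 R2 (chart e1 e2 u)) =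
  mx4 (fun i j => - R1 * (dl i 0 * dl j 0 + dl i 1 * dl j 1)
                  - R2 * sgn R e2 * (dl i 2 * dl j 2 + dl i 3 * dl j 3)).
Proof. by rewrite L_in_chart; apply/matrixP => i j; rewrite !mxE hess_L_chart !cu_delta. Qed.

Lemma hess0_H : hess0 (fun u => Defs.Hfun t (chart e1 e2 u)) =
  mx4 (fun i j => - (1 - t) * (dl i 0 * dl j 0 + dl i 1 * dl j 1)
   + t * (dl i 0 * dl j 2 + dl i 2 * dl j 0 + dl i 1 * dl j 3 + dl i 3 * dl j 1)
   - t * sgn R e1 * sgn R e2 * (dl i 0 * dl j 0 + dl i 1 * dl j 1 + dl i 2 * dl j 2 + dl i 3 * dl j 3)).
Proof. by rewrite H_in_chart; apply/matrixP => i j; rewrite !mxE hess_H_chart !cu_delta. Qed.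

Lemma omega_pole : omega_mx R1 R2 e2 0 = kronJ (- R1) 0 0 (- (sgn R e2 * R2)).
Proof.
apply/matrixP => i j; rewrite /omega_mx /kronJ !mxE !cu0 expr0n /= !subr0 sqrtr1 !divr1.
by case: i => [[|[|[|[|i]]]] hi] //; case: j => [[|[|[|[|j]]]] hj] //=; rewrite oppr0.
Qed.
End PoleLinearisation.

(* The inverse of diag(a, b) (x) J is diag(-1/a, -1/b) (x) J, as J^2 = -1. *)
Lemma inv_kronJ_diag {R : realType} (a b : R) : a != 0 -> b != 0 ->
  invmx (kronJ a 0 0 b) = kronJ (- a^-1) 0 0 (- b^-1).
Proof.
move=> a_neq0 b_neq0.
have inv_r : kronJ a 0 0 b *m kronJ (- a^-1) 0 0 (- b^-1) = 1%:M.
  by rewrite /kronJ mx4_mul mx4_1; mx4_entrywise; field.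
have [unit_ab _] := mulmx1_unit inv_r.
by rewrite -[invmx _]mulmx1 -inv_r mulKmx.
Qed.

Section PoleType.
Context {R : realType}.
Variables (R1 R2 t : R) (e1 e2 : bool).
Hypotheses (R1_gt0 : 0 < R1) (R2_gt0 : 0 < R2).
Let s1 := sgn R e1.
Let s2 := sgn R e2.
Let k11 := (- (1 - t) - t * s1 * s2) / R1.
Let k12 := t / R1.
Let k21 := t / (s2 * R2).
Let k22 := - t * s1 * s2 / (s2 * R2).

Let R1_neq0 : R1 != 0. Proof. by rewrite gt_eqF. Qed.
Let R2_neq0 : R2 != 0. Proof. by rewrite gt_eqF. Qed.
Let s2R2_neq0 : s2 * R2 != 0. Proof. by rewrite mulf_neq0 ?sgn_neq0. Qed.

Lemma A_L_pole : A_L R1 R2 e1 e2 = kronJ (-1) 0 0 (-1).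
Proof.
rewrite /A_L omega_pole inv_kronJ_diag ?oppr_eq0 // hess0_L /kronJ mx4_mul.
by mx4_entrywise; field; rewrite ?R1_neq0 ?R2_neq0 ?sgn_neq0.
Qed.

Lemma A_H_pole : A_H R1 R2 t e1 e2 = kronJ k11 k12 k21 k22.
Proof.
rewrite /A_H omega_pole inv_kronJ_diag ?oppr_eq0 // hess0_H /kronJ mx4_mul.
rewrite /k11 /k12 /k21 /k22 /s1 /s2.
by mx4_entrywise; field; rewrite ?R1_neq0 ?R2_neq0 ?sgn_neq0.
Qed.

Definition pole_disc : R := disc2 k11 k12 k21 k22.

(* K lies in sp(Omega), as A_H does. *)
Let K_sp : - R1 * k12 = - (s2 * R2) * k21.
Proof. by rewrite /k12 /k21 /s2; field; rewrite ?R1_neq0 ?R2_neq0 ?sgn_neq0. Qed.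

Lemma nondeg_of_pole_disc : pole_disc != 0 -> nondeg R1 R2 t e1 e2.
Proof.
move=> disc_neq0; rewrite /nondeg omega_pole A_L_pole A_H_pole.
by apply: cartan_of_disc; rewrite ?oppr_eq0.
Qed.

Lemma degenerate_of_pole_disc : pole_disc = 0 -> t != 0 -> ~ nondeg R1 R2 t e1 e2.
Proof.
move=> disc_0 t_neq0; rewrite /nondeg omega_pole A_L_pole A_H_pole.
by apply: not_cartan_of_disc; rewrite ?oppr_eq0 // mulf_neq0 // invr_eq0.
Qed.

Lemma ell_ell_of_pole_disc : 0 < pole_disc -> elliptic_elliptic R1 R2 t e1 e2.
Proof. by move=> disc_gt0; rewrite /elliptic_elliptic A_L_pole A_H_pole; apply: ell_ell_of_disc. Qed.

Lemma focus_focus_of_pole_disc : pole_disc < 0 -> focus_focus R1 R2 t e1 e2.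
Proof. by move=> disc_lt0; rewrite /focus_focus A_L_pole A_H_pole; apply: focus_focus_of_disc. Qed.
End PoleType.

Section FixedPoints.
Context {R : realType}.
Implicit Types (p v : 'rV[R]_6).

Lemma is_derive_ln_abs {y : R} : y != 0 -> is_derive y 1 (fun z : R => ln `|z|) y^-1.
Proof.
move=> y_neq0; have [y_lt0|y_gt0|y0] := ltgtP y 0; last by rewrite y0 eqxx in y_neq0.
- apply: (@near_eq_is_derive _ _ _ (fun z => ln (- z))).
    near=> z; rewrite ltr0_norm //.
    by near: z; apply: (@cvgr_lt _ _ _ _ id y _ 0 y_lt0); exact: cvg_id.
  have opp_der : is_derive y 1 (fun z : R => - z) (-1) by apply: is_deriveNid.
  have ln_der : is_derive (- y) 1 (@ln R) (- y)^-1 by apply: is_derive1_ln; rewrite oppr_gt0.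
  by have := is_derive1_comp ln_der opp_der; rewrite invrN mulrN1 opprK.
- apply: (@near_eq_is_derive _ _ _ (@ln R)); last exact: is_derive1_ln.
  near=> z; rewrite gtr0_norm //.
  by near: z; apply: (@cvgr_gt _ _ _ _ id y _ 0 y_gt0); exact: cvg_id.
Unshelve. all: by end_near.
Qed.

Lemma is_derive_co p v k : is_derive p v (fun q => co q k) (co v k).
Proof. exact: is_derive_coord. Qed.

Lemma is_derive_bfun (c : R) {g : 'rV[R]_6 -> R} {p v} {dg : R} :
  co p 2 != 0 -> is_derive p v g dg ->
  is_derive p v (bfun c g) (c * (co v 2 / co p 2) + dg).
Proof.
move=> z1_neq0 g_der.
have ln_der := is_derive_post (is_derive_co p v 2) (is_derive_ln_abs z1_neq0).
by rewrite /bfun; apply: is_derive_eq; rewrite /GRing.scale /=; ring.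
Qed.

Lemma is_derive_gL (R2 : R) p v : is_derive p v (gL R2) (R2 * co v 5).
Proof.
have := is_derive_co p v 5 => d5.
by rewrite /gL; apply: is_derive_eq; rewrite /GRing.scale /=; ring.
Qed.

Lemma is_derive_gH (t : R) p v : is_derive p v (gH t)
  (t * (co v 0 * co p 3 + co p 0 * co v 3 + co v 1 * co p 4 + co p 1 * co v 4
        + co v 2 * co p 5 + co p 2 * co v 5)).
Proof.
have := is_derive_co p v 0; have := is_derive_co p v 1; have := is_derive_co p v 2.
have := is_derive_co p v 3; have := is_derive_co p v 4; have := is_derive_co p v 5.
move=> d5 d4 d3 d2 d1 d0.
by rewrite /gH; apply: is_derive_eq; rewrite /GRing.scale /=; ring.
Qed.

Lemma is_derive_unique p v (f : 'rV[R]_6 -> R) (a b : R) :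
  is_derive p v f a -> is_derive p v f b -> a = b.
Proof. by move=> [_ <-] [_ <-]. Qed.

Lemma co_pole e1 e2 k : (k < 6)%N ->
  co (pole R e1 e2) k = nth 0 [:: 0; 0; sgn R e1; 0; 0; sgn R e2] k.
Proof. exact: co_mkpt. Qed.

Lemma pole_is_fixed (R1 R2 t : R) (e1 e2 : bool) : fixed_point R1 R2 t (pole R e1 e2).
Proof.
have z1_neq0 : co (pole R e1 e2) 2 != 0 by rewrite co_pole ?sgn_neq0.
have tangent v : tangentM (pole R e1 e2) v -> co v 2 = 0 /\ co v 5 = 0.
  rewrite /tangentM !co_pole //= !mulr0 !add0r => -[/eqP v2 /eqP v5].
  by move: v2 v5; rewrite !mulf_eq0 !(negPf (sgn_neq0 _)) !orbF => /eqP -> /eqP ->.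
split; [|split].
- by rewrite /onM !co_pole //= !expr0n /= !add0r !sgn_sqr.
- rewrite /bcrit z1_neq0 => v /tangent [v2 v5].
  apply: is_derive_eq (is_derive_bfun _ z1_neq0 (is_derive_gL R2 _ v)) _.
  by rewrite v2 v5 !mul0r !mulr0 addr0.
- rewrite /bcrit z1_neq0 => v /tangent [v2 v5].
  apply: is_derive_eq (is_derive_bfun _ z1_neq0 (is_derive_gH t _ v)) _.
  by rewrite v2 v5 !co_pole //=; ring.
Qed.

(* A critical point of L off Z lies on both z-axes:
   the tangent vectors (x1 z1, y1 z1, -(x1^2 + y1^2), 0, 0, 0) and
   (0, 0, 0, x2 z2, y2 z2, -(x2^2 + y2^2)) give x1^2 + y1^2 = x2^2 + y2^2 = 0. *)
Lemma critical_L_on_axes {R1 R2 : R} {p} : 0 < R1 -> 0 < R2 -> co p 2 != 0 ->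
  (forall v, tangentM p v -> is_derive p v (bfun (cL R1) (gL R2)) 0) ->
  [/\ co p 0 = 0, co p 1 = 0, co p 3 = 0 & co p 4 = 0].
Proof.
move=> R1_gt0 R2_gt0 z1_neq0 crit.
set x1 := co p 0; set y1 := co p 1; set z1 := co p 2.
set x2 := co p 3; set y2 := co p 4; set z2 := co p 5.
pose v1 := mkpt (x1 * z1) (y1 * z1) (- (x1 ^+ 2 + y1 ^+ 2)) 0 0 0.
pose v2 := mkpt 0 0 0 (x2 * z2) (y2 * z2) (- (x2 ^+ 2 + y2 ^+ 2)).
have dL_eq v : tangentM p v -> 0 = cL R1 * (co v 2 / z1) + R2 * co v 5.
  by move=> tv; exact: is_derive_unique (crit v tv) (is_derive_bfun _ z1_neq0 (is_derive_gL _ _ _)).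
have t1 : tangentM p v1.
  by rewrite /tangentM /v1 !co_mkpt //= -/x1 -/y1 -/z1 -/x2 -/y2 -/z2; split; ring.
have t2 : tangentM p v2.
  by rewrite /tangentM /v2 !co_mkpt //= -/x1 -/y1 -/z1 -/x2 -/y2 -/z2; split; ring.
have := dL_eq v1 t1; have := dL_eq v2 t2; rewrite /v1 /v2 !co_mkpt //= /cL => e2 e1.
have s1 : x1 ^+ 2 + y1 ^+ 2 = 0.
  apply/eqP; move/esym/eqP: e1; rewrite mulr0 addr0 !mulf_eq0 (gt_eqF R1_gt0).
  by rewrite invr_eq0 (negPf z1_neq0) orbF oppr_eq0.
have s2 : x2 ^+ 2 + y2 ^+ 2 = 0.
  apply/eqP; move/esym/eqP: e2; rewrite mul0r mulr0 add0r mulf_eq0 (gt_eqF R2_gt0).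
  by rewrite oppr_eq0.
by split; nra.
Qed.

Lemma mkpt_co p : p = mkpt (co p 0) (co p 1) (co p 2) (co p 3) (co p 4) (co p 5).
Proof.
apply/matrixP => i j; rewrite (ord1 i) /mkpt mxE /co.
by case: j => [[|[|[|[|[|[|j]]]]]] hj] //=; congr (p ord0 _); apply/val_inj; rewrite /= inordK.
Qed.

Lemma sqr1_sgn (z : R) : z ^+ 2 = 1 -> exists e, z = sgn R e.
Proof.
move=> z2; have : (z - 1) * (z + 1) = z ^+ 2 - 1 by ring.
rewrite z2 subrr => /eqP; rewrite mulf_eq0 => /orP [] /eqP z_eq.
  by exists true; apply/eqP; rewrite -subr_eq0 z_eq.
by exists false; apply/eqP; rewrite /sgn -subr_eq0 opprK z_eq.
Qed.

Lemma fixed_point_is_pole (R1 R2 t : R) p : 0 < R1 -> 0 < R2 ->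
  fixed_point R1 R2 t p -> exists e1 e2, p = pole R e1 e2.
Proof.
move=> R1_gt0 R2_gt0 [[sph1 sph2] [critL _]]; move: critL; rewrite /bcrit.
case: ifP => [z1_neq0 critL | _ [R1_0 _]]; last by rewrite /cL in R1_0; rewrite R1_0 ltxx in R1_gt0.
have [x1_0 y1_0 x2_0 y2_0] := critical_L_on_axes R1_gt0 R2_gt0 z1_neq0 critL.
have [e1 z1E] : exists e, co p 2 = sgn R e by apply: sqr1_sgn; nra.
have [e2 z2E] : exists e, co p 5 = sgn R e by apply: sqr1_sgn; nra.
by exists e1, e2; rewrite [LHS]mkpt_co x1_0 y1_0 x2_0 y2_0 z1E z2E.
Qed.
End FixedPoints.

Lemma sign_pmul {R : realFieldType} {x c P : R} : 0 < c -> x * c = P ->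
  [/\ (0 < x) = (0 < P), (x < 0) = (P < 0) & (x == 0) = (P == 0)].
Proof. by move=> c_gt0 <-; rewrite pmulr_lgt0 // pmulr_llt0 // mulf_eq0 (gt_eqF c_gt0) orbF. Qed.

(* The sign of the discriminant at each double pole, for 0 < R1 < R2 and
   0 <= t <= 1: clearing the positive denominator (R1 R2)^2 gives an explicit
   polynomial in t. *)
Section PoleDiscSign.
Context {R : realType}.

Lemma pole_disc_pp_gt0 (R1 R2 t : R) : 0 < R1 -> R1 < R2 -> 0 <= t -> t <= 1 ->
  0 < pole_disc R1 R2 t true true.
Proof.
move=> R1_gt0 R1_lt_R2 t_ge0 t_le1; have R2_gt0 : 0 < R2 by lra.
have E : pole_disc R1 R2 t true true * (R1 * R2) ^+ 2 = (t * R1 - R2) ^+ 2 + 4 * t ^+ 2 * R1 * R2.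
  by rewrite /pole_disc /disc2 /sgn; field; rewrite ?gt_eqF.
have [-> _ _] := sign_pmul (exprn_gt0 2 (mulr_gt0 R1_gt0 R2_gt0)) E.
have : 0 <= (1 - t) * R1 by rewrite mulr_ge0 ?subr_ge0 // ltW.
have : 0 <= 4 * t ^+ 2 * R1 * R2 by rewrite !mulr_ge0 // ?exprn_even_ge0 // ltW.
nra.
Qed.

Lemma pole_disc_mp_gt0 (R1 R2 t : R) : 0 < R1 -> R1 < R2 -> 0 <= t -> t <= 1 ->
  0 < pole_disc R1 R2 t false true.
Proof.
move=> R1_gt0 R1_lt_R2 t_ge0 t_le1; have R2_gt0 : 0 < R2 by lra.
have E : pole_disc R1 R2 t false true * (R1 * R2) ^+ 2 =
         ((2 * t - 1) * R2 - t * R1) ^+ 2 + 4 * t ^+ 2 * R1 * R2.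
  by rewrite /pole_disc /disc2 /sgn; field; rewrite ?gt_eqF.
have [-> _ _] := sign_pmul (exprn_gt0 2 (mulr_gt0 R1_gt0 R2_gt0)) E.
have [-> | t_neq0] := eqVneq t 0.
  by rewrite (_ : _ + _ = R2 ^+ 2); [rewrite exprn_gt0 | ring].
have : 0 <= ((2 * t - 1) * R2 - t * R1) ^+ 2 by rewrite exprn_even_ge0.
have t_gt0 : 0 < t by rewrite lt_def t_neq0.
have : 0 < 4 * t ^+ 2 * R1 * R2 by rewrite !mulr_gt0 // ?exprn_gt0.
lra.
Qed.

Lemma pole_disc_mm_gt0 (R1 R2 t : R) : 0 < R1 -> R1 < R2 -> 0 <= t -> t <= 1 ->
  0 < pole_disc R1 R2 t false false.
Proof.
move=> R1_gt0 R1_lt_R2 t_ge0 t_le1; have R2_gt0 : 0 < R2 by lra.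
have E : pole_disc R1 R2 t false false * (R1 * R2) ^+ 2 =
         (R2 - t * R1) ^+ 2 + 4 * (t * (1 - t) * R1 * R2).
  by rewrite /pole_disc /disc2 /sgn; field; rewrite ?gt_eqF.
have [-> _ _] := sign_pmul (exprn_gt0 2 (mulr_gt0 R1_gt0 R2_gt0)) E.
have : 0 <= (1 - t) * R1 by rewrite mulr_ge0 ?subr_ge0 // ltW.
have : 0 <= t * (1 - t) * R1 * R2 by rewrite !mulr_ge0 // ?subr_ge0 // ltW.
nra.
Qed.

(* At p_{+,-} the scaled discriminant factors as (P t - R2) (Q t - R2), where
   t^+ = R2 / P and t^- = R2 / Q. *)
Definition tplus_den (R1 R2 : R) : R := 2 * R2 + R1 - 2 * Num.sqrt (R1 * R2).
Definition tminus_den (R1 R2 : R) : R := 2 * R2 + R1 + 2 * Num.sqrt (R1 * R2).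

Lemma pole_disc_pm_factor (R1 R2 t : R) : 0 < R1 -> 0 < R2 ->
  pole_disc R1 R2 t true false * (R1 * R2) ^+ 2 =
  (tplus_den R1 R2 * t - R2) * (tminus_den R1 R2 * t - R2).
Proof.
move=> R1_gt0 R2_gt0.
have sR_sqr : Num.sqrt (R1 * R2) ^+ 2 = R1 * R2 by rewrite sqr_sqrtr // mulr_ge0 // ltW.
transitivity (((2 * t - 1) * R2 + t * R1) ^+ 2 - 4 * t ^+ 2 * Num.sqrt (R1 * R2) ^+ 2).
  by rewrite sR_sqr /pole_disc /disc2 /sgn; field; rewrite ?gt_eqF.
by rewrite /tplus_den /tminus_den; ring.
Qed.

(* 0 < P, since (R1 + R2)^2 >= 4 R1 R2 gives R1 + R2 >= 2 sqrt(R1 R2);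
   and P < Q. *)
Lemma tplus_den_gt0 (R1 R2 : R) : 0 < R1 -> 0 < R2 ->
  0 < tplus_den R1 R2 < tminus_den R1 R2.
Proof.
move=> R1_gt0 R2_gt0; set sR := Num.sqrt (R1 * R2).
have sR_sqr : sR ^+ 2 = R1 * R2 by rewrite sqr_sqrtr // mulr_ge0 // ltW.
have sR_gt0 : 0 < sR by rewrite sqrtr_gt0 mulr_gt0.
have : 0 <= (R1 + R2 - 2 * sR) * (R1 + R2 + 2 * sR).
  rewrite (_ : _ * _ = (R1 - R2) ^+ 2 + 4 * (R1 * R2 - sR ^+ 2)); last by ring.
  by rewrite sR_sqr subrr mulr0 addr0 exprn_even_ge0.
rewrite pmulr_lge0; last by lra.
by rewrite /tplus_den /tminus_den -/sR => ?; apply/andP; split; lra.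
Qed.

Lemma pole_disc_pm_sign (R1 R2 t : R) : 0 < R1 -> R1 < R2 -> 0 <= t -> t <= 1 ->
  [/\ t < t_minus R1 R2 \/ t_plus R1 R2 < t -> 0 < pole_disc R1 R2 t true false,
      t_minus R1 R2 < t < t_plus R1 R2 -> pole_disc R1 R2 t true false < 0 &
      t = t_minus R1 R2 \/ t = t_plus R1 R2 -> pole_disc R1 R2 t true false = 0 /\ t != 0].
Proof.
move=> R1_gt0 R1_lt_R2 t_ge0 t_le1; have R2_gt0 : 0 < R2 by lra.
have [-> -> disc0E] := sign_pmul (exprn_gt0 2 (mulr_gt0 R1_gt0 R2_gt0))
  (pole_disc_pm_factor R1 R2 t R1_gt0 R2_gt0).
have /andP [P_gt0 P_lt_Q] := tplus_den_gt0 R1 R2 R1_gt0 R2_gt0.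
rewrite (_ : t_plus R1 R2 = R2 / tplus_den R1 R2) // (_ : t_minus R1 R2 = R2 / tminus_den R1 R2) //.
set P := tplus_den R1 R2 in P_gt0 P_lt_Q disc0E *.
set Q := tminus_den R1 R2 in P_lt_Q disc0E *.
have Q_gt0 : 0 < Q by lra.
have PQ : P * t <= Q * t by rewrite ler_wpM2r // ltW.
split.
- case=> [|]; [rewrite ltr_pdivlMr // | rewrite ltr_pdivrMr //] => ht; nra.
- by move=> /andP [ht1 ht2]; rewrite ltr_pdivrMr // in ht1; rewrite ltr_pdivlMr // in ht2; nra.
- case=> t_eq; (split; last by rewrite t_eq mulf_neq0 ?invr_eq0 ?gt_eqF).
    by apply/eqP; rewrite disc0E t_eq [Q * _]mulrC (divfK (lt0r_neq0 Q_gt0)) subrr mulr0.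
  by apply/eqP; rewrite disc0E t_eq [P * _]mulrC (divfK (lt0r_neq0 P_gt0)) subrr mul0r.
Qed.
End PoleDiscSign.

Theorem proposition5p7 (R : realType) (R1 R2 t : R)
  (hR1 : 0 < R1) (hR12 : R1 < R2) (ht0 : 0 <= t) (ht1 : t <= 1) :
  [/\ (forall p : 'rV[R]_6,
         fixed_point R1 R2 t p <-> exists e1 e2 : bool, p = pole R e1 e2),
      (forall e1 e2 : bool, (e1, e2) != (true, false) ->
         nondeg R1 R2 t e1 e2 /\ elliptic_elliptic R1 R2 t e1 e2),
      ((t < t_minus R1 R2 \/ t_plus R1 R2 < t) ->
         nondeg R1 R2 t true false /\ elliptic_elliptic R1 R2 t true false),
      (t_minus R1 R2 < t < t_plus R1 R2 ->
         nondeg R1 R2 t true false /\ focus_focus R1 R2 t true false) &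
      ((t = t_minus R1 R2 \/ t = t_plus R1 R2) -> ~ nondeg R1 R2 t true false)].
Proof.
have hR2 : 0 < R2 := lt_trans hR1 hR12.
have ell_ell e1 e2 : 0 < pole_disc R1 R2 t e1 e2 ->
    nondeg R1 R2 t e1 e2 /\ elliptic_elliptic R1 R2 t e1 e2.
  move=> disc_gt0; split; last exact: ell_ell_of_pole_disc.
  by apply: nondeg_of_pole_disc; rewrite // lt0r_neq0.
have [pm_ell pm_foc pm_deg] := pole_disc_pm_sign R1 R2 t hR1 hR12 ht0 ht1.
split.
- move=> p; split; first exact: fixed_point_is_pole.
  by move=> [e1 [e2 ->]]; exact: pole_is_fixed.
- move=> [] [] // _; apply: ell_ell.
  + exact: pole_disc_pp_gt0.
  + exact: pole_disc_mp_gt0.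
  + exact: pole_disc_mm_gt0.
- by move=> /pm_ell; exact: ell_ell.
- move=> /pm_foc disc_lt0; split; last exact: focus_focus_of_pole_disc.
  by apply: nondeg_of_pole_disc; rewrite // ltr0_neq0.
- by move=> /pm_deg [disc_0 t_neq0]; exact: degenerate_of_pole_disc.
Qed.
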